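(* Let $K$ be any field, $n\ge 3$, $V$ an $n$-dimensional $K$-vector space, and let $S=\{t_\alpha=1+v_\alpha\otimes\phi_\alpha:\alpha\in I\}\subseteq SL(V)$ be a set of transvections. Then $S$ generates an irreducible subgroup of $SL(V)$ if and only if $S$ satisfies both of the following: (P1) $\langle v_\alpha:\alpha\in I\rangle=V$ and $\langle\phi_\alpha:\alpha\in I\rangle=V^*$; (P2) the transvection graph $\Gamma(S)$ is strongly connected.
   Context: A transvection is $1+d\otimes\phi\in SL(V)$ acting by $x\mapsto x+\phi(x)d$, $0\ne d\in V$, $0\neq\phi\in V^*$, $\phi(d)=0$. For a set $S$ of transvections, $\Gamma(S)$ is the directed graph with vertex set $S\setminus\{1\}$ and a directed edge from $1+d_1\otimes\phi_1$ to $1+d_2\otimes\phi_2$ iff $\phi_2(d_1)\neq 0$. *)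

From HB Require Import structures.
From mathcomp Require Import all_boot all_order all_algebra.
From Stdlib Require Import Relation_Operators.
Set Implicit Arguments. Unset Strict Implicit. Unset Printing Implicit Defensive.
Import GRing.Theory.
Local Open Scope ring_scope.

(* V = 'rV[K]_n (row vectors), V^* = 'cV[K]_n, phi(x) = (x *m phi) 0 0.
   The transvection 1 + d (x) phi acts on row vectors by right
   multiplication with the matrix 1 + phi *m d :  x |-> x + phi(x) d. *)

Definition fapp (K : fieldType) (n : nat) (phi : 'cV[K]_n) (x : 'rV[K]_n) : K :=
  (x *m phi) 0 0.

Definition transv (K : fieldType) (n : nat) (d : 'rV[K]_n) (phi : 'cV[K]_n)
  : 'M[K]_n := 1%:M + phi *m d.

Definition is_transv_data (K : fieldType) (n : nat) (d : 'rV[K]_n) (phi : 'cV[K]_n)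
  : Prop := d != 0 /\ phi != 0 /\ fapp phi d = 0.

Inductive gen_group (K : fieldType) (n : nat) (S : 'M[K]_n -> Prop) : 'M[K]_n -> Prop :=
| gen_one : gen_group S 1%:M
| gen_in  : forall s, S s -> gen_group S s
| gen_mul : forall g h, gen_group S g -> gen_group S h -> gen_group S (g *m h)
| gen_inv : forall g, gen_group S g -> gen_group S (invmx g).

Definition irreducible_mxgroup (K : fieldType) (n : nat) (G : 'M[K]_n -> Prop) : Prop :=
  forall U : 'M[K]_n, (forall g, G g -> (U *m g <= U)%MS) -> U = 0 \/ row_full U.

Definition spans_rV (K : fieldType) (n : nat) (I : Type) (v : I -> 'rV[K]_n) : Prop :=
  forall x : 'rV[K]_n, exists (s : seq I) (c : I -> K), x = \sum_(a <- s) c a *: v a.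

Definition spans_cV (K : fieldType) (n : nat) (I : Type) (f : I -> 'cV[K]_n) : Prop :=
  forall x : 'cV[K]_n, exists (s : seq I) (c : I -> K), x = \sum_(a <- s) c a *: f a.

Definition tedge (K : fieldType) (n : nat) (I : Type) (v : I -> 'rV[K]_n)
  (phi : I -> 'cV[K]_n) (a b : I) : Prop := fapp (phi b) (v a) <> 0.

(* Gamma(S) strongly connected, where the vertices are the transvections
   t_a = transv (v a) (phi a) (distinct indices may give the same vertex):
   between any two vertices there is a directed path. *)
Definition strongly_connected_tgraph (K : fieldType) (n : nat) (I : Type)
  (v : I -> 'rV[K]_n) (phi : I -> 'cV[K]_n) : Prop :=
  forall a b : I, transv (v a) (phi a) = transv (v b) (phi b)
                  \/ clos_trans I (tedge v phi) a b.

From HB Require Import structures.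
From mathcomp Require Import all_boot all_order all_algebra.
From mathcomp Require Import boolp.
From Stdlib Require Import Relation_Operators.
Set Implicit Arguments. Unset Strict Implicit. Unset Printing Implicit Defensive.
Import GRing.Theory.
Local Open Scope ring_scope.

(* A subspace U is invariant under 1 + d (x) phi exactly when phi vanishes on U
   or d lies in U.  Hence, for an irreducible group, the span of the v_a, the
   common kernel of the phi_a, and the span of the v_c with c reachable from a
   fixed vertex are invariant subspaces, which forces (P1) and (P2).
   Conversely, by (P1) some phi_a does not vanish on a nonzero invariant U, so
   v_a lies in U; along an edge a -> b the form phi_b does not vanish on
   v_a, so v_b lies in U too, and by (P2) and (P1) U contains a spanning set.
   As the index set is arbitrary, spans are taken over finite subfamilies,
   which suffice because V is finite-dimensional. *)

Section Spans.
Variables (K : fieldType) (n : nat) (I : Type).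
(* [{classic I}] gives the bare index type a classical decidable equality, so
   that finite subfamilies can be chosen duplicate-free. *)
Implicit Types (w : I -> 'rV[K]_n) (s : seq {classic I}).

Definition span_seq w s : 'M[K]_n := (\sum_(a <- s) <<w a>>)%MS.

Lemma span_seq_cons w a s : span_seq w (a :: s) = (<<w a>> + span_seq w s)%MS.
Proof. exact: big_cons. Qed.

Lemma span_seq_sub w s m (U : 'M_(m, n)) :
  (span_seq w s <= U)%MS = all (fun a : {classic I} => w a <= U)%MS s.
Proof.
elim: s => [|a s IH]; first by rewrite /span_seq big_nil sub0mx.
by rewrite span_seq_cons addsmx_sub genmxE IH.
Qed.

Lemma span_seq_sup w s a : a \in s -> (w a <= span_seq w s)%MS.
Proof.
by move=> sa; move: (submx_refl (span_seq w s)); rewrite span_seq_sub => /allP->.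
Qed.

Lemma span_seq_comb w s x : uniq s -> (x <= span_seq w s)%MS ->
  exists c : I -> K, x = \sum_(a <- s) c a *: w a.
Proof.
elim: s x => [|a s IH] x.
  by rewrite /span_seq big_nil submx0 => _ /eqP->; exists (fun=> 0); rewrite big_nil.
rewrite span_seq_cons /= => /andP[sNa us] /sub_addsmxP[[u1 u2] /= ->].
have [c ->] := IH _ us (submxMl u2 _).
have /sub_rVP[k ->] : (u1 *m <<w a>> <= w a)%MS by rewrite -(genmxE (w a)) submxMl.
exists (fun b : {classic I} => if b == a then k else c b).
rewrite big_cons eqxx; congr (_ + _); apply: eq_big_seq => b bs.
by case: eqP bs sNa => // -> ->.
Qed.

Lemma exists_span_seq w (P : I -> Prop) : exists s : seq {classic I},
  [/\ uniq s, {in s, forall a, P a} & forall b, P b -> (w b <= span_seq w s)%MS].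
Proof.
(* Adding an uncovered member raises the rank, which is bounded by n. *)
have grow k :
    (exists s : seq {classic I}, [/\ uniq s, {in s, forall a, P a}
       & forall b, P b -> (w b <= span_seq w s)%MS])
  \/ (exists s : seq {classic I},
       [/\ uniq s, {in s, forall a, P a} & (k <= \rank (span_seq w s))%N]).
  elim: k => [|k [cover|[s [us Ps rk]]]]; [by right; exists [::] | by left |].
  have [cover|] := pselect (forall b, P b -> (w b <= span_seq w s)%MS).
    by left; exists s.
  move=> /existsNP[b /not_implyP[Pb /negP wb]]; right; exists (b :: s); split.
  - by rewrite /= us andbT; apply: contra wb; apply: span_seq_sup.
  - by move=> a; rewrite inE => /predU1P[->|/Ps].
  - apply: leq_ltn_trans rk _; apply: rank_ltmx.
    by rewrite span_seq_cons ltmxE addsmxSr /= addsmx_sub genmxE negb_and wb.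
have [//|[s [_ _]]] := grow n.+1.
by rewrite ltnNge rank_leq_row.
Qed.

Lemma spans_rV_full w s : uniq s -> row_full (span_seq w s) -> spans_rV w.
Proof.
by move=> us full x; have [c ->] := span_seq_comb us (submx_full x full); exists s, c.
Qed.

Lemma spans_cV_tr (f : I -> 'cV[K]_n) :
  spans_rV (fun a => (f a)^T) -> spans_cV f.
Proof.
move=> span x; have [s [c def_x]] := span x^T; exists s, c.
by apply: trmx_inj; rewrite def_x linear_sum; apply: eq_bigr => a _; rewrite linearZ.
Qed.

Lemma spans_cV_mul_eq0 m (f : I -> 'cV[K]_n) (U : 'M_(m, n)) :
  spans_cV f -> (forall a, U *m f a = 0) -> U = 0.
Proof.
move=> span Uf0; apply/matrixP => i j; rewrite mxE.
have [s [c def_e]] := span (delta_mx j 0).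
have : U *m (delta_mx j 0 : 'cV_n) = 0.
  by rewrite def_e mulmx_sumr big1 // => a _; rewrite -scalemxAr Uf0 scaler0.
by rewrite -colE => /matrixP/(_ i 0); rewrite !mxE.
Qed.

End Spans.

Section Transvection.
Variables (K : fieldType) (n : nat).
Implicit Types (d : 'rV[K]_n) (f : 'cV[K]_n).

Lemma fappE f (x : 'rV_n) : x *m f = (fapp f x)%:M.
Proof. exact: mx11_scalar. Qed.

Lemma fapp_eq0 f (x : 'rV_n) : (fapp f x == 0) = (x *m f == 0).
Proof. by rewrite fappE -scalemx1 scaler_eq0 (negPf (matrix_nonzero1 _ _)) orbF. Qed.

Lemma mulmx_transv m (X : 'M[K]_(m, n)) d f : X *m transv d f = X + X *m f *m d.
Proof. by rewrite mulmxDr mulmx1 mulmxA. Qed.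

Lemma transv_unit d f : fapp f d = 0 -> transv d f \in unitmx.
Proof.
move=> fd0; have [] // := @mulmx1_unit _ _ (transv d f) (transv (- d) f).
have fixed_f : transv d f *m f = f.
  by rewrite mulmxDl mul1mx -mulmxA fappE fd0 raddf0 mulmx0 addr0.
by rewrite mulmx_transv fixed_f mulmxN addrK.
Qed.

Lemma mulmx_full_eq0 m p (U : 'M[K]_(m, n)) (B : 'M_(n, p)) :
  row_full U -> (U *m B == 0) = (B == 0).
Proof.
move=> full; apply/eqP/eqP => [UB0|->]; last exact: mulmx0.
by rewrite -[B]mul1mx -(mulVpmx full) -mulmxA UB0 mulmx0.
Qed.

Lemma submx_colmul m p (u : 'M[K]_(m, 1)) d (U : 'M_(p, n)) :
  u != 0 -> (u *m d <= U)%MS = (d <= U)%MS.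
Proof.
move=> u0; apply/idP/idP => [sU|]; last exact: submx_trans (submxMl u d).
have u_full : row_full u by rewrite /row_full eqn_leq rank_leq_col lt0n mxrank_eq0.
by rewrite -[d]mul1mx -(mulVpmx u_full) -mulmxA; apply: submx_trans sU; apply: submxMl.
Qed.

Lemma stablemx_transvE m (U : 'M[K]_(m, n)) d f :
  stablemx U (transv d f) = (U *m f == 0) || (d <= U)%MS.
Proof.
have -> : stablemx U (transv d f) = (U *m f *m d <= U)%MS.
  rewrite mulmx_transv; apply/idP/idP => [sU|]; last exact: addmx_sub.
  by rewrite -(addKr U (U *m f *m d)) addmx_sub ?eqmx_opp.
by have [->|Uf0] := eqVneq (U *m f) 0; rewrite ?mul0mx ?sub0mx ?submx_colmul.
Qed.

End Transvection.

Section GeneratedGroup.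
Variables (K : fieldType) (n : nat) (S : 'M[K]_n -> Prop).
Hypothesis S_unit : forall s, S s -> s \in unitmx.

Lemma gen_group_unit g : gen_group S g -> g \in unitmx.
Proof.
elim=> [|s /S_unit //|g1 g2 _ Ug1 _ Ug2|g1 _ Ug1]; first exact: unitmx1.
  by rewrite unitmx_mul Ug1 Ug2.
by rewrite unitmx_inv.
Qed.

Lemma gen_group_stable (U : 'M[K]_n) :
  (forall s, S s -> stablemx U s) -> forall g, gen_group S g -> stablemx U g.
Proof.
move=> stable_S g; elim=> [|s /stable_S //|g' h _ sUg _ sUh|g' Gg' sUg].
- by rewrite mulmx1.
- by rewrite mulmxA; apply: submx_trans sUh; apply: submxMr.
have Ug := gen_group_unit Gg'.
have sU : (U <= U *m g')%MS.
  by rewrite -(mxrank_leqif_sup sUg).2 mxrankMfree ?row_free_unit.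
by have := submxMr (invmx g') sU; rewrite -mulmxA mulmxV // mulmx1.
Qed.

End GeneratedGroup.

Section TransvectionFamily.
Variables (K : fieldType) (n : nat) (I : Type).
Variables (v : I -> 'rV[K]_n) (phi : I -> 'cV[K]_n).
Hypothesis data : forall a, is_transv_data (v a) (phi a).

Let v_neq0 a : v a != 0. Proof. by case: (data a). Qed.
Let phi_neq0 a : phi a != 0. Proof. by case: (data a) => _ []. Qed.

Definition transv_invariant (U : 'M[K]_n) :=
  forall a, (U *m phi a == 0) || (v a <= U)%MS.

Lemma irreducible_transvE :
  irreducible_mxgroup (gen_group (fun t => exists a, t = transv (v a) (phi a)))
  <-> forall U, transv_invariant U -> U = 0 \/ row_full U.
Proof.
split=> irr U invU; apply: irr.
  apply: gen_group_stable => [_ [a ->]|_ [a ->]]; last by rewrite stablemx_transvE.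
  by apply: transv_unit; case: (data a) => _ [].
by move=> a; rewrite -stablemx_transvE; apply: invU; apply: gen_in; exists a.
Qed.

Section Irreducible.
Hypothesis irr : forall U, transv_invariant U -> U = 0 \/ row_full U.

Lemma irreducible_index_inhabited : (1 < n)%N -> inhabited I.
Proof.
move=> n_gt1; apply: contrapT => I0.
pose i0 := Ordinal (ltnW n_gt1).
have inv0 : transv_invariant (delta_mx i0 i0) by move=> a; case: I0.
case: (irr inv0) => [/eqP|].
  by rewrite -mxrank_eq0 mxrank_delta.
by rewrite /row_full mxrank_delta => /eqP n1; move: (n_gt1); rewrite -n1.
Qed.

Lemma irreducible_spans_rV : inhabited I -> spans_rV v.
Proof.
case=> a0; have [s [us _ cover]] := exists_span_seq v (fun=> True).
have inv : transv_invariant (span_seq v s) by move=> a; rewrite cover ?orbT.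
apply: (spans_rV_full us); case: (irr inv) => // span0.
by case/negP: (v_neq0 a0); rewrite -submx0 -span0 cover.
Qed.

Lemma irreducible_spans_cV : inhabited I -> spans_cV phi.
Proof.
case=> a0; apply: spans_cV_tr.
have [s [us _ cover]] := exists_span_seq (fun a => (phi a)^T) (fun=> True).
apply: (spans_rV_full us); set Phi := span_seq _ s.
have ker_phi a : kermx Phi^T *m phi a = 0.
  have /submxP[D def_phi] := cover a Logic.I.
  by rewrite -[phi a]trmxK def_phi trmx_mul mulmxA mulmx_ker mul0mx.
have inv : transv_invariant (kermx Phi^T) by move=> a; rewrite ker_phi eqxx.
case: (irr inv) => [/eqP|full].
  by rewrite kermx_eq0 /row_free mxrank_tr.
by case/negP: (phi_neq0 a0); rewrite -(mulmx_full_eq0 _ full) ker_phi.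
Qed.

Lemma irreducible_strongly_connected : strongly_connected_tgraph v phi.
Proof.
move=> a b; pose reach c := c = a \/ clos_trans I (tedge v phi) a c.
suff : reach b by case=> [->|]; [left|right].
have reach_step c d : reach c -> tedge v phi c d -> reach d.
  by case=> [->|ac] cd; right; [apply: t_step | apply: t_trans ac (t_step _ _ _ _ cd)].
have [s [_ reach_s cover]] := exists_span_seq v reach.
have phi_out d : ~ reach d -> span_seq v s *m phi d == 0.
  move=> nd; rewrite -sub_kermx span_seq_sub; apply/allP => c cs.
  rewrite sub_kermx -fapp_eq0; apply/negPn/negP => /eqP cd.
  exact: nd (reach_step c d (reach_s c cs) cd).
have inv : transv_invariant (span_seq v s).
  move=> d; have [rd|nd] := pselect (reach d); first by rewrite cover ?orbT.
  by rewrite phi_out.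
case: (irr inv) => [span0|full].
  by case/negP: (v_neq0 a); rewrite -submx0 -span0 cover //; left.
apply: contrapT => nb.
by case/negP: (phi_neq0 b); rewrite -(mulmx_full_eq0 _ full) phi_out.
Qed.

End Irreducible.

Section Connected.
Hypotheses (v_span : spans_rV v) (phi_span : spans_cV phi).
Hypothesis connected : strongly_connected_tgraph v phi.

Lemma transv_invariant_edge U c d : transv_invariant U ->
  (v c <= U)%MS -> tedge v phi c d -> (v d <= U)%MS.
Proof.
move=> invU /submxP[D def_vc] cd; case/orP: (invU d) => // /eqP Uphi0.
by case: cd; apply/eqP; rewrite fapp_eq0 def_vc -mulmxA Uphi0 mulmx0.
Qed.

Lemma transv_invariant_trivial U : transv_invariant U -> U = 0 \/ row_full U.
Proof.
move=> invU; have [->|U0] := eqVneq U 0; [by left | right].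
have [a va] : exists a, (v a <= U)%MS.
  apply: contrapT => none; case/eqP: U0; apply: spans_cV_mul_eq0 phi_span _ => a.
  by apply/eqP; case/orP: (invU a) => // va; case: none; exists a.
have v_sub b : (v b <= U)%MS.
  case: (connected a b) => [/addrI same_phiv | path]; last first.
    by elim: path va => [c d cd|c d e _ IHcd _ IHde] vc;
      [exact: transv_invariant_edge vc cd | exact/IHde/IHcd].
  by rewrite -(submx_colmul _ _ (phi_neq0 b)) -same_phiv submx_colmul.
rewrite -sub1mx; apply/row_subP => i; have [s [c ->]] := v_span (row i 1%:M).
by apply: summx_sub => b _; apply: scalemx_sub.
Qed.

End Connected.

End TransvectionFamily.

Theorem theorem5p2 (K : fieldType) (n : nat) (I : Type)
  (v : I -> 'rV[K]_n) (phi : I -> 'cV[K]_n) :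
  (3 <= n)%N ->
  (forall a, is_transv_data (v a) (phi a)) ->
  irreducible_mxgroup (gen_group (fun t => exists a, t = transv (v a) (phi a)))
  <-> (spans_rV v /\ spans_cV phi) /\ strongly_connected_tgraph v phi.
Proof.
move=> n_ge3 data; apply: iff_trans (irreducible_transvE data) _.
split=> [irr | [[v_span phi_span] connected] U].
  have I_inhabited := irreducible_index_inhabited irr (ltnW n_ge3).
  split; last exact: irreducible_strongly_connected.
  by split; [exact: irreducible_spans_rV | exact: irreducible_spans_cV].
exact: transv_invariant_trivial.
Qed.
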